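(* Let $A\in\mathbb{R}^{m\times n}$ with columns $A_1,\dots,A_n$, let $y\in\mathbb{R}^m$, $\gamma>0$ and $k\in\{1,\dots,n-1\}$. Let $x^*$ be an optimal solution of (CC) with optimal value $\zeta_{CC}$, set $\varepsilon^*=y-Ax^*$ and $\delta_i=(A_i'\varepsilon^* )^2$ for $i=1,\dots,n$, let $\delta_{[j]}$ denote the $j$-th largest entry of the vector $\delta=(\delta_1,\dots,\delta_n)$, and let $\bar\zeta$ be any number with $\bar\zeta\ge\zeta_C$. Then every optimal solution $(x,z)$ of (MIPC) satisfies, for each $i$: $z_i=0$ if $\delta_i\le\delta_{[k+1]}$ and $\zeta_{CC}-\gamma(\delta_i-\delta_{[k]})>\bar\zeta$; and $z_i=1$ if $\delta_i\ge\delta_{[k]}$ and $\zeta_{CC}+\gamma(\delta_i-\delta_{[k+1]})>\bar\zeta$.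
   Context: For $x_i\in\mathbb{R}$, $z_i\ge 0$ the perspective term $x_i^2/z_i$ is defined with the convention $x_i^2/z_i=0$ if $x_i=z_i=0$ and $x_i^2/z_i=+\infty$ if $z_i=0$, $x_i\neq 0$. (MIPC) is the problem $\zeta_C=\min_{x,z}\ \|y-Ax\|_2^2+\frac1\gamma\sum_{i=1}^n \frac{x_i^2}{z_i}$ subject to $\sum_{i=1}^n z_i\le k$, $x_i(1-z_i)=0$ for $i=1,\dots,n$, $x\in\mathbb{R}^n$, $z\in\{0,1\}^n$ (a mixed-integer formulation of $\min_x \|y-Ax\|_2^2+\frac1\gamma\|x\|_2^2$ s.t. $\|x\|_0\le k$). (CC) is its convex (perspective) relaxation: $\zeta_{CC}=\min_{x,z}\ \|y-Ax\|_2^2+\frac1\gamma\sum_{i=1}^n \frac{x_i^2}{z_i}$ subject to $\sum_{i=1}^n z_i\le k$, $x\in\mathbb{R}^n$, $z\in[0,1]^n$; an optimal solution $x^*$ means the $x$-part of an optimal pair $(x^*,z^* )$. $A_i'$ denotes the transpose of the $i$-th column of $A$. *)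

From mathcomp Require Import all_boot all_order all_algebra.
From mathcomp Require Import boolp classical_sets reals constructive_ereal ereal.
Set Implicit Arguments. Unset Strict Implicit. Unset Printing Implicit Defensive.
Import Order.TTheory GRing.Theory Num.Theory.
Local Open Scope ring_scope.

Section Defs.
Variables (R : realType) (m n : nat).
Implicit Types (A : 'M[R]_(m, n)) (y : 'cV[R]_m) (x z : 'cV[R]_n).

Definition persp (a b : R) : \bar R :=
  if (b == 0)%R then (if (a == 0)%R then 0%E else +oo%E) else (a ^+ 2 / b)%R%:E.

Definition sqnorm (v : 'cV[R]_m) : R := (\sum_(j < m) v j 0 ^+ 2)%R.

Definition obj A y (gamma : R) x z : \bar R :=
  ((sqnorm (y - A *m x))%:E + (gamma^-1)%:E * \sum_(i < n) persp (x i 0%R) (z i 0%R))%E.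

Definition feasCC (k : nat) x z : Prop :=
  (forall i : 'I_n, 0 <= z i 0 <= 1)%R /\ (\sum_(i < n) z i 0 <= k%:R)%R.

Definition feasC (k : nat) x z : Prop :=
  (forall i : 'I_n, z i 0 = 0 \/ z i 0 = 1)%R /\ (\sum_(i < n) z i 0 <= k%:R)%R /\
  (forall i : 'I_n, x i 0 * (1 - z i 0) = 0)%R.

Definition zetaCC A y gamma k : \bar R :=
  ereal_inf [set v : \bar R | exists x z, feasCC k x z /\ v = obj A y gamma x z].
Definition zetaC A y gamma k : \bar R :=
  ereal_inf [set v : \bar R | exists x z, feasC k x z /\ v = obj A y gamma x z].

Definition optimalCC A y gamma k x z : Prop :=
  feasCC k x z /\ forall x' z', feasCC k x' z' -> (obj A y gamma x z <= obj A y gamma x' z')%E.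
Definition optimalC A y gamma k x z : Prop :=
  feasC k x z /\ forall x' z', feasC k x' z' -> (obj A y gamma x z <= obj A y gamma x' z')%E.

Definition delta A y x (i : 'I_n) : R := (((A^T *m (y - A *m x)) i 0) ^+ 2)%R.

(* delta_[j] : the j-th largest entry of delta (1-indexed j) *)
Definition delta_ord A y x (j : nat) : R :=
  nth 0%R (sort (fun a b : R => (b <= a)%R) [seq delta A y x i | i <- enum 'I_n]) j.-1.

End Defs.

(* Let (xs, zs) be optimal for (CC), a = A'(y - A xs) the column correlations
   with its residual, delta_j = a_j^2, and S_k the sum of the k largest delta_j.
   - Weak duality (objR_ge_dual): the tangent bound x^2/z >= 2 g a x - g^2 a^2 z
     and ||(y - A x) - (y - A xs)||^2 >= 0 bound the value of every admissible
     (x, z) below by ||y - A xs||^2 + 2 <a, xs> - gamma sum_j z_j delta_j.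
   - First-order optimality (first_order_optimality): (CC) is convex, so moving
     from (xs, zs) towards (gamma zb a, zb) cannot decrease the objective; at
     t = 0 this gives ||y - A xs||^2 + 2 <a, xs> >= zeta_CC + gamma sum_j zb_j delta_j.
     With zb the indicator of the k largest delta_j we get the duality gap
     (duality_gap): obj(x, z) >= zeta_CC + gamma (S_k - sum_j z_j delta_j).
   - Top-k sums (top_sum_gap_in/out): for a set Z of at most k indices,
     S_k - sum_Z delta >= delta_[k] - delta_i if i is in Z, and
     S_k - sum_Z delta >= delta_i - delta_[k+1] otherwise.
   For an optimal (x, z) of (MIPC), obj(x, z) <= zbar, and z is the indicator of
   its support; the two gaps contradict the hypotheses unless z_i has the stated
   value.  (The order conditions on delta_i turn out not to be needed.) *)

From mathcomp Require Import all_boot all_order all_algebra.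
From mathcomp Require Import boolp classical_sets reals constructive_ereal ereal.
From mathcomp Require Import ring lra.
Set Implicit Arguments. Unset Strict Implicit. Unset Printing Implicit Defensive.
Import Order.TTheory GRing.Theory Num.Theory.
Local Open Scope ring_scope.

Section PrefixSums.
Variable R : realType.
Local Notation ge := (fun a b : R => b <= a).

Lemma sum_take_succ_le (x : R) (s : seq R) (q : nat) :
  0 <= x -> all (fun b => b <= x) s ->
  \sum_(a <- take q.+1 s) a <= x + \sum_(a <- take q s) a.
Proof.
move=> x_ge0; elim: s q => [|b s IH] q /=; first by rewrite big_nil addr0.
case/andP=> b_le_x s_le_x; case: q => [|q] /=.
  by rewrite take0 !big_cons !big_nil !addr0.
by rewrite !big_cons addrCA lerD2l; apply: IH.
Qed.

Lemma sum_subseq_le_prefix (s t : seq R) :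
  sorted ge s -> all (fun a => 0 <= a) s -> subseq t s ->
  \sum_(a <- t) a <= \sum_(a <- take (size t) s) a.
Proof.
elim: s t => [|x s IH] t; first by move=> _ _ /eqP ->; rewrite big_nil.
move=> s_sorted /= /andP[x_ge0 s_ge0].
have tail_sorted : sorted ge s by apply: path_sorted s_sorted.
have tail_le_x : all (fun b => b <= x) s.
  apply: order_path_min s_sorted => a b c /= ba cb; exact: le_trans cb ba.
case: t => [|b t] /=; first by rewrite !big_nil.
case: ifP => [/eqP -> | _] sub_t.
  by rewrite !big_cons lerD2l; apply: IH.
apply: le_trans (IH _ tail_sorted s_ge0 sub_t) _.
by rewrite big_cons; apply: sum_take_succ_le.
Qed.

Lemma sum_take_mono (s : seq R) (p q : nat) :
  all (fun a => 0 <= a) s -> (p <= q)%N ->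
  \sum_(a <- take p s) a <= \sum_(a <- take q s) a.
Proof.
move=> s_ge0 pq; rewrite -(subnKC pq) takeD big_cat /= lerDl big_seq.
apply: sumr_ge0 => a /mem_take /mem_drop a_in_s.
by move/allP: s_ge0; apply.
Qed.

Lemma sum_take_succ (s : seq R) (p : nat) :
  \sum_(a <- take p.+1 s) a = \sum_(a <- take p s) a + nth 0 s p.
Proof.
have [p_lt|p_ge] := ltnP p (size s).
  by rewrite (take_nth 0 p_lt) -cats1 big_cat big_seq1.
by rewrite !take_oversize ?nth_default ?addr0 //; apply: leqW.
Qed.

End PrefixSums.

Section TopSums.
Variables (R : realType) (n : nat) (d : 'I_n -> R).
Local Notation ge := (fun a b : R => b <= a).

Definition sorted_values : seq R := sort ge [seq d i | i <- enum 'I_n].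
Definition kth_largest (p : nat) : R := nth 0 sorted_values p.-1.
Definition top_sum (p : nat) : R := \sum_(a <- take p sorted_values) a.

Lemma top_sumS (p : nat) : top_sum p.+1 = top_sum p + kth_largest p.+1.
Proof. exact: sum_take_succ. Qed.

Let sorted_idx := sort (relpre d ge) (enum 'I_n).

Let sorted_valuesE : sorted_values = [seq d i | i <- sorted_idx].
Proof. by rewrite /sorted_values sort_map. Qed.

Let perm_sorted_idx : perm_eq sorted_idx (enum 'I_n).
Proof. by rewrite perm_sort. Qed.

Lemma top_sum_attained (p : nat) : (p <= n)%N ->
  exists T : {set 'I_n}, #|T| = p /\ \sum_(j in T) d j = top_sum p.
Proof.
move=> p_le_n; have uniq_T : uniq (take p sorted_idx).
  by apply: take_uniq; rewrite sort_uniq enum_uniq.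
exists [set j in take p sorted_idx]; split.
  by rewrite cardsE (card_uniqP uniq_T) size_takel // size_sort size_enum_ord.
rewrite /top_sum sorted_valuesE -map_take big_map (big_uniq _ uniq_T).
by apply: eq_bigl => j; rewrite inE.
Qed.

Hypothesis d_ge0 : forall i, 0 <= d i.

Lemma top_sum_ge (P : {set 'I_n}) (p : nat) : (#|P| <= p)%N ->
  \sum_(j in P) d j <= top_sum p.
Proof.
move=> card_P.
set t := [seq d i | i <- [seq i <- sorted_idx | i \in P]].
have sub_t : subseq t sorted_values.
  by rewrite sorted_valuesE; apply/map_subseq/filter_subseq.
have size_t : size t = #|P|.
  rewrite size_map size_filter -sum1_count (perm_big _ perm_sorted_idx) /=.
  by rewrite big_enum_cond -sum1_card.
have sorted_s : sorted ge sorted_values by apply: sort_sorted => a b; apply: le_total.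
have s_ge0 : all (fun a => 0 <= a) sorted_values.
  by rewrite sorted_valuesE; apply/allP => a /mapP[i _ ->].
have -> : \sum_(j in P) d j = \sum_(a <- t) a.
  by rewrite big_map big_filter (perm_big _ perm_sorted_idx) /= big_enum_cond.
apply: le_trans (sum_subseq_le_prefix sorted_s s_ge0 sub_t) _.
by apply: sum_take_mono; rewrite ?size_t.
Qed.

Lemma top_sum_gap_in (Z : {set 'I_n}) (k : nat) (i : 'I_n) :
  (0 < k)%N -> (#|Z| <= k)%N -> i \in Z ->
  kth_largest k - d i <= top_sum k - \sum_(j in Z) d j.
Proof.
move=> k_gt0 card_Z i_in_Z.
have card_rest : (#|Z :\ i| <= k.-1)%N.
  by move: card_Z; rewrite (cardsD1 i Z) i_in_Z add1n -(prednK k_gt0) ltnS.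
have := top_sum_ge card_rest.
rewrite -[in top_sum k](prednK k_gt0) top_sumS prednK // (big_setD1 i i_in_Z) /=.
lra.
Qed.

(* A selection of at most k indices omitting i misses at least d i minus the
   (k+1)-th largest value, since adding i gives a selection of k + 1 indices. *)
Lemma top_sum_gap_out (Z : {set 'I_n}) (k : nat) (i : 'I_n) :
  (#|Z| <= k)%N -> i \notin Z ->
  d i - kth_largest k.+1 <= top_sum k - \sum_(j in Z) d j.
Proof.
move=> card_Z i_notin_Z.
have card_more : (#|i |: Z| <= k.+1)%N by rewrite cardsU1 i_notin_Z.
have := top_sum_ge card_more.
rewrite top_sumS (big_setU1 _ i_notin_Z) /=.
lra.
Qed.

End TopSums.

Section ScalarInequalities.
Variable R : realType.

(* Joint convexity (subadditivity) of the perspective (u, p) |-> u^2/p,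
   with the convention u^2/0 = 0 enforced by u = 0 whenever p = 0. *)
Lemma persp_subadditive (u v p q : R) : 0 <= p -> 0 <= q ->
  (p = 0 -> u = 0) -> (q = 0 -> v = 0) ->
  (u + v) ^+ 2 / (p + q) <= u ^+ 2 / p + v ^+ 2 / q.
Proof.
move=> p_ge0 q_ge0 hu hv.
have [p0|p_neq0] := eqVneq p 0; first by rewrite p0 (hu p0) expr0n /= !mul0r !add0r.
have [q0|q_neq0] := eqVneq q 0; first by rewrite q0 (hv q0) expr0n /= !mul0r !addr0.
have pq_neq0 : p + q != 0 by rewrite gt_eqF // addr_gt0 // lt_def ?p_neq0 ?q_neq0.
rewrite -subr_ge0.
have -> : u ^+ 2 / p + v ^+ 2 / q - (u + v) ^+ 2 / (p + q) =
    (u * q - v * p) ^+ 2 / (p * q * (p + q)) by field; rewrite p_neq0 q_neq0 pq_neq0.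
by rewrite divr_ge0 ?sqr_ge0 // !mulr_ge0 // addr_ge0.
Qed.

Lemma persp_scale (c a b : R) : (c * a) ^+ 2 / (c * b) = c * (a ^+ 2 / b).
Proof.
have [->|c_neq0] := eqVneq c 0; first by rewrite !mul0r expr0n /= mul0r.
have [->|b_neq0] := eqVneq b 0; first by rewrite !mulr0 invr0 !mulr0.
by field; rewrite c_neq0 b_neq0.
Qed.

Lemma persp_proportional (g z a : R) : (g * z * a) ^+ 2 / z = g ^+ 2 * a ^+ 2 * z.
Proof.
have [->|z_neq0] := eqVneq z 0; first by rewrite invr0 !mulr0.
by field.
Qed.

(* Tangent-plane lower bound of the perspective at the point (g z a, z). *)
Lemma persp_tangent (g x z a : R) : 0 <= z -> (z = 0 -> x = 0) ->
  2 * g * x * a - g ^+ 2 * z * a ^+ 2 <= x ^+ 2 / z.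
Proof.
move=> z_ge0 hx; have [z0|z_neq0] := eqVneq z 0.
  by rewrite z0 (hx z0) invr0 !mulr0 !mul0r subrr.
rewrite -subr_ge0.
have -> : x ^+ 2 / z - (2 * g * x * a - g ^+ 2 * z * a ^+ 2) = (x - g * z * a) ^+ 2 / z
  by field.
by rewrite divr_ge0 ?sqr_ge0.
Qed.

(* If t L + t^2 Q >= 0 for all small steps t in (0, 1] and Q >= 0, then L >= 0:
   a directional derivative at a minimum is nonnegative. *)
Lemma slope_ge0 (L Q : R) : 0 <= Q ->
  (forall t, 0 < t -> t <= 1 -> 0 <= t * L + t ^+ 2 * Q) -> 0 <= L.
Proof.
move=> Q_ge0 step; rewrite leNgt; apply/negP => L_lt0.
have QL_gt0 : 0 < Q - L by rewrite subr_gt0 (lt_le_trans L_lt0 Q_ge0).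
pose t := - L / (Q - L).
have t_gt0 : 0 < t by rewrite divr_gt0 // oppr_gt0.
have t_le1 : t <= 1 by rewrite ler_pdivrMr // mul1r; lra.
have := step t t_gt0 t_le1.
have -> : t * L + t ^+ 2 * Q = - t * (L ^+ 2 / (Q - L)) by rewrite /t; field; rewrite gt_eqF.
rewrite mulNr oppr_ge0 pmulr_rle0 // => contra.
have : 0 < L ^+ 2 / (Q - L) by apply: divr_gt0 => //; nra.
by rewrite ltNge contra.
Qed.

End ScalarInequalities.

Section InnerProduct.
Variables (R : realType) (m : nat).
Implicit Types u v w : 'cV[R]_m.

Definition dot u v : R := \sum_(r < m) u r 0 * v r 0.

Lemma dotC u v : dot u v = dot v u.
Proof. by apply: eq_bigr => r _; rewrite mulrC. Qed.

Lemma dotBl u w v : dot (u - w) v = dot u v - dot w v.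
Proof. by rewrite /dot -sumrB; apply: eq_bigr => r _; rewrite !mxE mulrBl. Qed.

Lemma dotZr u v t : dot u (t *: v) = t * dot u v.
Proof. by rewrite /dot mulr_sumr; apply: eq_bigr => r _; rewrite !mxE mulrCA. Qed.

Lemma dot_self u : dot u u = sqnorm u.
Proof. by apply: eq_bigr => r _; rewrite expr2. Qed.

Lemma sqnormB u v : sqnorm (u - v) = sqnorm u - 2 * dot u v + sqnorm v.
Proof.
rewrite /sqnorm /dot mulr_sumr -sumrB -big_split /=; apply: eq_bigr => r _.
rewrite !mxE; ring.
Qed.

Lemma sqnormZ v t : sqnorm (t *: v) = t ^+ 2 * sqnorm v.
Proof. by rewrite /sqnorm mulr_sumr; apply: eq_bigr => r _; rewrite !mxE exprMn. Qed.

Lemma sqnorm_ge0 u : 0 <= sqnorm u.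
Proof. by apply: sumr_ge0 => r _; apply: sqr_ge0. Qed.

Lemma dot_mulmx (n : nat) (B : 'M[R]_(m, n)) u (w : 'cV[R]_n) :
  dot u (B *m w) = \sum_(j < n) (B^T *m u) j 0 * w j 0.
Proof.
rewrite /dot; under eq_bigr => r _ do rewrite mxE mulr_sumr.
rewrite exchange_big /=; apply: eq_bigr => j _.
by rewrite mxE mulr_suml; apply: eq_bigr => r _; rewrite !mxE mulrCA mulrA.
Qed.

End InnerProduct.

Section Objective.
Variables (R : realType) (m n : nat) (A : 'M[R]_(m, n)) (y : 'cV[R]_m) (gamma : R).
Hypothesis gamma_gt0 : 0 < gamma.
Implicit Types x z : 'cV[R]_n.

(* Real-valued versions of the perspective sum and of the objective; they agree
   with obj on admissible pairs, i.e. z >= 0 and x vanishing where z does. *)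
Definition persp_sum x z : R := \sum_(j < n) x j 0 ^+ 2 / z j 0.
Definition objR x z : R := sqnorm (y - A *m x) + gamma^-1 * persp_sum x z.
Definition admissible x z : Prop := forall j, 0 <= z j 0 /\ (z j 0 = 0 -> x j 0 = 0).

Definition corr (u : 'cV[R]_n) : 'cV[R]_n := A^T *m (y - A *m u).

Lemma obj_admissible x z : admissible x z -> obj A y gamma x z = (objR x z)%:E.
Proof.
move=> adm; rewrite /obj /objR /persp_sum.
have -> : (\sum_(i < n) persp (x i 0%R) (z i 0%R)
          = \sum_(i < n) (x i 0%R ^+ 2 / z i 0%R)%:E)%E.
  apply: eq_bigr => j _; rewrite /persp; case: eqP => [z0|//].
  by rewrite ((adm j).2 z0) eqxx z0 expr0n /= mul0r.
by rewrite sumEFin -EFinM -EFinD.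
Qed.

(* Perspective terms are nonnegative, so a single infinite term makes obj infinite. *)
Lemma persp_ge0 (a b : R) : 0 <= b -> (0 <= persp a b)%E.
Proof.
move=> b_ge0; rewrite /persp; case: eqP => _; first by case: eqP.
by rewrite lee_fin divr_ge0 // sqr_ge0.
Qed.

Lemma admissible_of_finite x z (c : R) : (forall j, 0 <= z j 0) ->
  (obj A y gamma x z <= c%:E)%E -> admissible x z.
Proof.
move=> z_ge0 obj_le j; split => // z0; apply/eqP; apply: contraTT obj_le => x_neq0.
rewrite /obj (bigD1 j) //= {1}/persp z0 eqxx (negbTE x_neq0) addye; last first.
  by rewrite gt_eqF // (lt_le_trans (ltNye 0)) // sume_ge0 // => i _; apply: persp_ge0.
by rewrite mulry gtr0_sg ?invr_gt0 // mul1e addey.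
Qed.

Lemma optimalCC_value k xs zs : optimalCC A y gamma k xs zs ->
  admissible xs zs /\ zetaCC A y gamma k = (objR xs zs)%:E.
Proof.
move=> [[zs_range zs_sum] zs_min].
have feas0 : feasCC k 0 (0 : 'cV[R]_n).
  split => [j|]; first by rewrite mxE lexx ler01.
  by rewrite big1 ?ler0n // => j _; rewrite mxE.
have adm : admissible xs zs.
  apply: (admissible_of_finite (c := objR 0 0)) => [j|].
    by case/andP: (zs_range j).
  by rewrite -obj_admissible ?zs_min // => j; rewrite mxE.
split => //; rewrite -obj_admissible //; apply/le_anti/andP; split.
  by apply: ereal_inf_lbound; exists xs, zs.
by apply/ereal_infP => v [x' [z' [feas ->]]]; apply: zs_min.
Qed.

Lemma optimalC_value_le k x z (zbar : R) : optimalC A y gamma k x z ->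
  (zetaC A y gamma k <= zbar%:E)%E -> admissible x z /\ objR x z <= zbar.
Proof.
move=> [[z_bin feas] z_min] zetaC_le.
have obj_le : (obj A y gamma x z <= zbar%:E)%E.
  apply: le_trans zetaC_le; apply/ereal_infP => v [x' [z' [feas' ->]]].
  exact: z_min.
have adm : admissible x z.
  by apply: admissible_of_finite obj_le => j; case: (z_bin j) => ->; rewrite ?ler01.
by split => //; rewrite -lee_fin -obj_admissible.
Qed.

Lemma residual_segment x x' (t : R) :
  sqnorm (y - A *m (x + t *: (x' - x))) = sqnorm (y - A *m x)
    - 2 * t * \sum_(j < n) (A^T *m (y - A *m x)) j 0 * (x' - x) j 0
    + t ^+ 2 * sqnorm (A *m (x' - x)).
Proof.
rewrite mulmxDr -scalemxAr opprD addrA sqnormB dotZr sqnormZ dot_mulmx; ring.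
Qed.

Lemma objR_ge_dual (u : 'cV[R]_n) x z : admissible x z ->
  sqnorm (y - A *m u) + 2 * (\sum_(j < n) corr u j 0 * u j 0)
    - gamma * (\sum_(j < n) z j 0 * corr u j 0 ^+ 2) <= objR x z.
Proof.
move=> adm; set e := y - A *m u; rewrite -[corr u]/(A^T *m e); set a := A^T *m e.
have resid := sqnorm_ge0 ((y - A *m x) - e).
rewrite sqnormB dotBl [dot (A *m x) _]dotC dot_mulmx -/a in resid.
have dot_ye : dot y e = sqnorm e + \sum_(j < n) a j 0 * u j 0.
  by rewrite -dot_self {1}/e dotBl [dot (A *m u) _]dotC dot_mulmx -/a addrNK.
have tangent : \sum_(j < n) (2 * gamma * x j 0 * a j 0 - gamma ^+ 2 * z j 0 * a j 0 ^+ 2)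
    <= persp_sum x z.
  by apply: ler_sum => j _; apply: persp_tangent; case: (adm j).
have gi_gt0 : 0 < gamma^-1 by rewrite invr_gt0.
have := ler_wpM2l (ltW gi_gt0) tangent.
have -> : gamma^-1 * \sum_(j < n) (2 * gamma * x j 0 * a j 0 - gamma ^+ 2 * z j 0 * a j 0 ^+ 2)
    = 2 * \sum_(j < n) a j 0 * x j 0 - gamma * \sum_(j < n) z j 0 * a j 0 ^+ 2.
  rewrite !mulr_sumr -sumrB; apply: eq_bigr => j _; by field; rewrite gt_eqF.
rewrite /objR; move: resid; rewrite dot_ye; lra.
Qed.

End Objective.

Section Segments.
Variables (R : realType) (n : nat).
Implicit Types (t : R) (x z : 'cV[R]_n).

Definition along t x x' : 'cV[R]_n := x + t *: (x' - x).

Lemma alongE t x x' j : along t x x' j 0 = (1 - t) * x j 0 + t * x' j 0.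
Proof. by rewrite !mxE; ring. Qed.

Lemma feasCC_along k t x z x' z' : 0 <= t -> t <= 1 ->
  feasCC k x z -> feasCC k x' z' -> feasCC k (along t x x') (along t z z').
Proof.
move=> t_ge0 t_le1 [z_range z_sum] [z'_range z'_sum]; split => [j|].
  rewrite alongE; move: (z_range j) (z'_range j) => /andP[z0 z1] /andP[z'0 z'1].
  by apply/andP; split; nra.
have -> : \sum_(j < n) along t z z' j 0
    = (1 - t) * \sum_(j < n) z j 0 + t * \sum_(j < n) z' j 0.
  by rewrite !mulr_sumr -big_split; apply: eq_bigr => j _; rewrite alongE.
nra.
Qed.

Lemma admissible_along t x z x' z' : 0 <= t -> t <= 1 ->
  admissible x z -> admissible x' z' -> admissible (along t x x') (along t z z').
Proof.
move=> t_ge0 t_le1 adm adm' j; rewrite !alongE.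
have [z_ge0 x_supp] := adm j; have [z'_ge0 x'_supp] := adm' j.
split=> [|zt0]; first nra.
have /eqP : t * z' j 0 = 0 by nra.
rewrite mulf_eq0 => /orP[/eqP t0|/eqP /x'_supp ->].
  move: zt0; rewrite t0 subr0 !mul1r !mul0r !addr0; exact: x_supp.
have /eqP : (1 - t) * z j 0 = 0 by nra.
by rewrite mulr0 addr0 mulf_eq0 => /orP[/eqP ->|/eqP /x_supp ->]; rewrite ?mul0r ?mulr0.
Qed.

Lemma persp_sum_along t x z x' z' : 0 <= t -> t <= 1 ->
  admissible x z -> admissible x' z' ->
  persp_sum (along t x x') (along t z z') <= (1 - t) * persp_sum x z + t * persp_sum x' z'.
Proof.
move=> t_ge0 t_le1 adm adm'; rewrite /persp_sum !mulr_sumr -big_split /=.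
apply: ler_sum => j _; rewrite !alongE -!persp_scale.
have [z_ge0 x_supp] := adm j; have [z'_ge0 x'_supp] := adm' j.
apply: persp_subadditive; rewrite ?mulr_ge0 ?subr_ge0 //.
  by move/eqP; rewrite mulf_eq0 => /orP[/eqP ->|/eqP /x_supp ->]; rewrite ?mul0r ?mulr0.
by move/eqP; rewrite mulf_eq0 => /orP[/eqP ->|/eqP /x'_supp ->]; rewrite ?mul0r ?mulr0.
Qed.

End Segments.

Section FirstOrderOptimality.
Variables (R : realType) (m n : nat) (A : 'M[R]_(m, n)) (y : 'cV[R]_m) (gamma : R).
Variables (k : nat) (xs zs : 'cV[R]_n).
Hypotheses (gamma_gt0 : 0 < gamma) (xs_opt : optimalCC A y gamma k xs zs).

(* First-order optimality of (xs, zs) against the direction of a point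
   (gamma zb_j a_j, zb_j), where a = corr xs and zb satisfies the z-constraints. *)
Lemma first_order_optimality (zb : 'cV[R]_n) : feasCC k 0 zb ->
  gamma * (\sum_(j < n) zb j 0 * corr A y xs j 0 ^+ 2)
    <= 2 * (\sum_(j < n) corr A y xs j 0 * xs j 0) - gamma^-1 * persp_sum xs zs.
Proof.
move=> zb_feas; set a := corr A y xs; have [xs_feas xs_min] := xs_opt.
have xs_adm := (optimalCC_value gamma_gt0 xs_opt).1.
set S1 := \sum_(j < n) a j 0 * xs j 0; set S2 := \sum_(j < n) zb j 0 * a j 0 ^+ 2.
pose xb : 'cV[R]_n := \col_j (gamma * zb j 0 * a j 0).
have xb_feas : feasCC k xb zb := zb_feas.
have xb_adm : admissible xb zb.
  move=> j; have /andP[zb_ge0 _] := zb_feas.1 j.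
  by split => // zb0; rewrite mxE zb0 mulr0 mul0r.
have persp_b : persp_sum xb zb = gamma ^+ 2 * S2.
  rewrite /persp_sum /S2 mulr_sumr; apply: eq_bigr => j _.
  by rewrite mxE persp_proportional mulrA mulrAC.
have slope : \sum_(j < n) a j 0 * (xb - xs) j 0 = gamma * S2 - S1.
  rewrite /S1 /S2 mulr_sumr -sumrB; apply: eq_bigr => j _; rewrite !mxE; ring.
rewrite -subr_ge0; apply: (slope_ge0 (sqnorm_ge0 (A *m (xb - xs)))) => t t_gt0 t_le1.
have t_ge0 := ltW t_gt0.
have xt_adm := admissible_along t_ge0 t_le1 xs_adm xb_adm.
have := xs_min _ _ (feasCC_along t_ge0 t_le1 xs_feas xb_feas).
rewrite (obj_admissible _ _ _ xs_adm) (obj_admissible _ _ _ xt_adm) lee_fin /objR.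
rewrite residual_segment -/a slope.
have := persp_sum_along t_ge0 t_le1 xs_adm xb_adm.
have gi_gt0 : 0 < gamma^-1 by rewrite invr_gt0.
move/(ler_wpM2l (ltW gi_gt0)).
have -> : gamma^-1 * ((1 - t) * persp_sum xs zs + t * persp_sum xb zb)
    = (1 - t) * (gamma^-1 * persp_sum xs zs) + t * (gamma * S2).
  by rewrite persp_b; field; rewrite gt_eqF.
lra.
Qed.

Lemma duality_gap x z : (k <= n)%N -> admissible x z ->
  objR A y gamma xs zs
    + gamma * (top_sum (delta A y xs) k - \sum_(j < n) z j 0 * delta A y xs j)
    <= objR A y gamma x z.
Proof.
move=> k_le_n adm.
have [T [card_T sum_T]] := top_sum_attained (delta A y xs) k_le_n.
pose zT : 'cV[R]_n := \col_j (j \in T)%:R.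
have zT_sum (F : 'I_n -> R) : \sum_(j < n) zT j 0 * F j = \sum_(j in T) F j.
  rewrite [RHS]big_mkcond; apply: eq_bigr => j _.
  by rewrite mxE; case: (j \in T); rewrite ?mul1r ?mul0r.
have zT_feas : feasCC k 0 zT.
  split => [j|]; first by rewrite mxE; case: (j \in T); rewrite ?lexx ?ler01.
  have := zT_sum (fun _ => 1); under eq_bigr do rewrite mulr1.
  by move=> ->; rewrite sumr_const card_T.
have := first_order_optimality zT_feas; rewrite /= zT_sum sum_T.
have := objR_ge_dual A y gamma_gt0 xs adm.
rewrite /objR /delta -/(corr A y xs); lra.
Qed.

End FirstOrderOptimality.

Section BinarySelection.
Variables (R : realType) (n : nat) (z : 'cV[R]_n).
Hypothesis z_bin : forall j, z j 0 = 0 \/ z j 0 = 1.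

Definition support : {set 'I_n} := [set j | z j 0 == 1].

Lemma binary_sum (F : 'I_n -> R) : \sum_(j < n) z j 0 * F j = \sum_(j in support) F j.
Proof.
rewrite [RHS]big_mkcond; apply: eq_bigr => j _; rewrite inE.
by case: (z_bin j) => ->; rewrite ?mul1r ?mul0r ?eqxx // eq_sym oner_eq0.
Qed.

Lemma binary_card (k : nat) : \sum_(j < n) z j 0 <= k%:R -> (#|support| <= k)%N.
Proof.
have -> : \sum_(j < n) z j 0 = \sum_(j < n) z j 0 * 1 
  by apply: eq_bigr => j _; rewrite mulr1.
by rewrite binary_sum sumr_const ler_nat.
Qed.

End BinarySelection.

Lemma delta_ordE (R : realType) (m n : nat) (A : 'M[R]_(m, n)) y x (p : nat) :
  delta_ord A y x p = kth_largest (delta A y x) p.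
Proof. by []. Qed.

Unset Implicit Arguments.
Set Strict Implicit.
Theorem proposition2 (R : realType) (m n : nat) (A : 'M[R]_(m, n)) (y : 'cV[R]_m)
  (gamma : R) (k : nat) (hgamma : 0 < gamma) (hk1 : (1 <= k)%N) (hkn : (k < n)%N)
  (xs zs : 'cV[R]_n) (hopt : optimalCC A y gamma k xs zs)
  (zbar : R) (hzbar : (zetaC A y gamma k <= zbar%:E)%E)
  (x z : 'cV[R]_n) (hxz : optimalC A y gamma k x z) (i : 'I_n) :
  (delta A y xs i <= delta_ord A y xs k.+1 ->
     (zetaCC A y gamma k - (gamma * (delta A y xs i - delta_ord A y xs k))%:E > zbar%:E)%E ->
     z i 0 = 0) /\
  (delta A y xs i >= delta_ord A y xs k ->
     (zetaCC A y gamma k + (gamma * (delta A y xs i - delta_ord A y xs k.+1))%:E > zbar%:E)%E ->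
     z i 0 = 1).
Proof.
have [_ zetaCC_val] := optimalCC_value hgamma hopt.
have [x_adm x_le_zbar] := optimalC_value_le hgamma hxz hzbar.
have [[z_bin [z_sum _]] _] := hxz.
have d_ge0 j : 0 <= delta A y xs j by apply: sqr_ge0.
have gap := duality_gap hgamma hopt (ltnW hkn) x_adm.
rewrite (binary_sum z_bin) in gap.
have card_Z := binary_card z_bin z_sum.
rewrite zetaCC_val !delta_ordE; split=> _; rewrite lte_fin => zbar_lt.
- case: (z_bin i) => // z1; exfalso.
  have i_in_Z : i \in support z by rewrite inE z1.
  have := ler_wpM2l (ltW hgamma) (top_sum_gap_in d_ge0 hk1 card_Z i_in_Z).
  lra.
- case: (z_bin i) => // z0; exfalso.
  have i_notin_Z : i \notin support z by rewrite inE z0 eq_sym oner_eq0.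
  have := ler_wpM2l (ltW hgamma) (top_sum_gap_out d_ge0 card_Z i_notin_Z).
  lra.
Qed.
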